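(* Let $\mathcal{X}$ be a finite nonempty set of types, $n=(n_x)_{x\in\mathcal{X}}$ nonnegative integers, and $\Phi=(\Phi_{xy})_{x,y\in\mathcal{X}}$ a real matrix with $\Phi_{xy}=\Phi_{yx}$. Then $\mathcal{W}_{\mathcal{F}}(n,\Phi)=\mathcal{W}_{\mathcal{B}}(n,n,\Phi/2)$. Moreover, the maximization problem defining $\mathcal{W}_{\mathcal{F}}(n,\Phi)$ has a half-integral optimal solution (all entries in $\frac12\mathbb{N}$).
   Context: Fractional roommate matchings: $\mathcal{F}(n)=\{\mu=(\mu_{xy})_{x,y\in\mathcal{X}}:\ \mu_{xy}\ge0\text{ real},\ \mu_{xy}=\mu_{yx},\ 2\mu_{xx}+\sum_{y\ne x}\mu_{xy}\le n_x\ \forall x\}$, and $\mathcal{W}_{\mathcal{F}}(n,\Phi)=\max_{\mu\in\mathcal{F}(n)}\bigl(\sum_x\mu_{xx}\Phi_{xx}+\sum_{x\ne y}\mu_{xy}\Phi_{xy}/2\bigr)$. Bipartite problem: $\mathcal{B}(n,n)=\{\nu\in\mathbb{N}^{\mathcal{X}\times\mathcal{X}}:\ \sum_y\nu_{xy}\le n_x\ \forall x,\ \sum_x\nu_{xy}\le n_y\ \forall y\}$ and $\mathcal{W}_{\mathcal{B}}(n,n,\Phi/2)=\max_{\nu\in\mathcal{B}(n,n)}\sum_{x,y}\nu_{xy}\Phi_{xy}/2$. *)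

From HB Require Import structures.
From mathcomp Require Import all_boot all_order all_algebra.
From mathcomp Require Import reals.
Set Implicit Arguments. Unset Strict Implicit. Unset Printing Implicit Defensive.
Import Order.TTheory GRing.Theory Num.Theory.
Local Open Scope ring_scope.

Section Defs.
Variables (R : realType) (X : finType).

Definition frac_matching (n : X -> nat) (mu : X -> X -> R) : Prop :=
  (forall x y, 0 <= mu x y) /\ (forall x y, mu x y = mu y x) /\
  (forall x, 2 * mu x x + \sum_(y | y != x) mu x y <= (n x)%:R).

Definition frac_obj (Phi : X -> X -> R) (mu : X -> X -> R) : R :=
  \sum_x mu x x * Phi x x + \sum_x \sum_(y | y != x) mu x y * Phi x y / 2.

Definition bip_matching (n : X -> nat) (nu : X -> X -> nat) : Prop :=
  (forall x, (\sum_y nu x y <= n x)%N) /\ (forall y, (\sum_x nu x y <= n y)%N).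

Definition bip_obj (Phi : X -> X -> R) (nu : X -> X -> nat) : R :=
  \sum_x \sum_y (nu x y)%:R * (Phi x y / 2).

Definition half_integral (mu : X -> X -> R) : Prop :=
  forall x y, exists k : nat, mu x y = k%:R / 2.
End Defs.

Definition is_max_value (T : Type) (R : realType) (S : T -> Prop) (f : T -> R) (v : R) : Prop :=
  (exists t, S t /\ f t = v) /\ (forall t, S t -> f t <= v).

(* Doubling the diagonal turns a fractional roommate matching into a fractional
   bipartite matching of B(n, n) with the same value for Phi/2; conversely,
   symmetrising a bipartite matching nu into (nu + nu^T)/2 gives a half-integral
   roommate matching with the same value, because Phi is symmetric.  It remains
   to see that fractional bipartite matchings are no better than integral ones.
   After adding a slack row and column, all row and column sums are integral
   equalities.  Every line through a fractional entry contains a second one, so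
   (one column constraint being redundant) there are fewer line constraints than
   fractional entries: some nonzero direction supported on the fractional
   entries preserves all line sums.  Moving along it, in the direction that does
   not decrease the objective, until the first entry becomes integral strictly
   reduces the number of fractional entries. *)

From HB Require Import structures.
From mathcomp Require Import all_boot all_order all_algebra.
From mathcomp Require Import reals.
From mathcomp Require Import zify ring lra.
Set Implicit Arguments. Unset Strict Implicit. Unset Printing Implicit Defensive.
Import Order.TTheory GRing.Theory Num.Theory.
Local Open Scope ring_scope.

Lemma big_option (V : nmodType) (T : finType) (f : option T -> V) :
  \sum_(o : option T) f o = f None + \sum_t f (Some t).
Proof.
rewrite (bigD1 None) //=; congr (_ + _).
rewrite (reindex_omap Some (fun o => o)); last by case.
by apply: eq_bigl => t; rewrite eqxx.
Qed.

Lemma double_card_imset_leq (T K : finType) (pi : T -> K) (F : {set T}) :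
  (forall p, p \in F -> exists q, [/\ q \in F, pi q = pi p & q != p]) ->
  (2 * #|pi @: F| <= #|F|)%N.
Proof.
move=> partner.
rewrite -[#|F|]sum1_card (partition_big pi (mem (pi @: F))) /=; last first.
  by move=> p pF; apply: imset_f.
rewrite mulnC -sum_nat_const; apply: leq_sum => _ /imsetP [p pF ->].
have [q [qF qp q_neq_p]] := partner p pF.
rewrite (bigD1 p) /=; last by rewrite pF eqxx.
by rewrite (bigD1 q) /= ?qF ?qp ?eqxx ?q_neq_p // addnA leq_addr.
Qed.

Lemma underdetermined_system_nontrivial (R : fieldType) (T K : finType)
    (F : {set T}) (Ks : {set K}) (c : K -> T -> R) :
  (#|Ks| < #|F|)%N ->
  exists d : T -> R, [/\ forall t, t \notin F -> d t = 0, exists t, d t != 0 &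
    forall k, k \in Ks -> \sum_t c k t * d t = 0].
Proof.
move=> ltKF.
pose A : 'M[R]_(#|F|, #|Ks|) := \matrix_(a, b) c (enum_val b) (enum_val a).
have [u /sub_kermxP uA /rV0Pn [a0 ua0]] :
    exists2 u : 'rV_#|F|, (u <= kermx A)%MS & u != 0.
  apply/rowV0Pn; rewrite kermx_eq0 /row_free.
  by rewrite neq_ltn (leq_ltn_trans (rank_leq_col A) ltKF).
pose d t := \sum_(a | enum_val a == t) u 0 a.
have dE a : d (enum_val a) = u 0 a.
  by rewrite /d (big_pred1 a) // => b; apply/eqP/eqP => [/enum_val_inj|->].
have sum_dE g : \sum_t g t * d t = \sum_a g (enum_val a) * u 0 a.
  rewrite [RHS](partition_big (@enum_val _ (mem F)) predT) //=.
  apply: eq_bigr => t _; rewrite /d mulr_sumr.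
  by apply: eq_bigr => a /eqP ->.
exists d; split.
- move=> t tF; rewrite /d big_pred0 // => a.
  by apply: contraNF tF => /eqP <-; apply: enum_valP.
- by exists (enum_val a0); rewrite dE.
- move=> k kKs; rewrite sum_dE.
  transitivity ((u *m A) 0 (enum_rank_in kKs k)); last by rewrite uA mxE.
  by rewrite mxE; apply: eq_bigr => a _; rewrite mxE enum_rankK_in // mulrC.
Qed.

Lemma fractional_partner (R : archiNumDomainType) (T : finType) (P : pred T)
    (v : T -> R) p :
  \sum_(q | P q) v q \is a Num.int -> P p -> v p \isn't a Num.int ->
  exists q, [/\ P q, q != p & v q \isn't a Num.int].
Proof.
move=> sum_int Pp vp.
have [q /and3P [Pq qp vq]|others_int] :=
  pickP [pred q | [&& P q, q != p & v q \isn't a Num.int]]; first by exists q.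
case/negP: vp; rewrite (bigD1 p) //= in sum_int.
rewrite -(addrK (\sum_(q | P q && (q != p)) v q) (v p)) rpredB //.
apply: rpred_sum => q /andP [Pq qp].
by have := others_int q; rewrite /= Pq qp => /negbFE.
Qed.

Section IntegerHitTime.
Variable R : archiRealFieldType.

(* The least [e >= 0] making [x + e * delta] an integer, when [x] is not one;
   division by zero makes it [0] when [delta = 0]. *)
Definition int_hit_time (x delta : R) : R :=
  if 0 < delta then ((Num.floor x + 1)%:~R - x) / delta
  else ((Num.floor x)%:~R - x) / delta.

Lemma int_hit_time_ge0 x delta : 0 <= int_hit_time x delta.
Proof.
rewrite /int_hit_time; case: ifPn => [delta_gt0|].
  by rewrite divr_ge0 ?subr_ge0 ?ltW ?floorD1_gt.
by rewrite -leNgt => delta_le0; rewrite mulr_le0 ?subr_le0 ?floor_le ?invr_le0.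
Qed.

Lemma int_hit_time_int x delta :
  delta != 0 -> x + int_hit_time x delta * delta \is a Num.int.
Proof.
by move=> delta_neq0; rewrite /int_hit_time; case: ifP => _;
  rewrite divfK // addrC subrK intr_int.
Qed.

Lemma ge0_shift_le_int_hit x delta e :
  0 <= x -> 0 <= e <= int_hit_time x delta -> 0 <= x + e * delta.
Proof.
move=> x_ge0 /andP [e_ge0 e_le].
have [delta_gt0|delta_le0] := ltrP 0 delta.
  by rewrite addr_ge0 // mulr_ge0 // ltW.
have [->|delta_neq0] := eqVneq delta 0; first by rewrite mulr0 addr0.
have delta_lt0 : delta < 0 by rewrite lt_neqAle delta_neq0.
rewrite /int_hit_time ltNge delta_le0 /= in e_le.
have := ler_wnM2r (ltW delta_lt0) e_le; rewrite divfK // => floor_le_shift.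
have : 0 <= (Num.floor x)%:~R :> R by rewrite ler0z floor_ge0.
lra.
Qed.

End IntegerHitTime.

Section Transportation.
Variables (R : archiRealFieldType) (I J : finType).
Implicit Types (v d w : I * J -> R) (k : I + J).

Definition on_line k (p : I * J) : bool :=
  match k with inl i => p.1 == i | inr j => p.2 == j end.

Definition line_sum v k : R := \sum_(p | on_line k p) v p.

Definition fractional v : {set I * J} := [set p | v p \isn't a Num.int].

Definition lin_obj w v : R := \sum_p v p * w p.

Lemma line_sum_inl v i : line_sum v (inl i) = \sum_j v (i, j).
Proof.
have -> : \sum_j v (i, j) = \sum_(a | a == i) \sum_j v (a, j).
  by rewrite big_pred1_eq.
rewrite pair_big_dep /line_sum.
by apply: eq_big => [[a b]|[a b] _] //=; rewrite andbT.
Qed.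

Lemma line_sum_inr v j : line_sum v (inr j) = \sum_i v (i, j).
Proof.
rewrite (eq_bigr (fun i => \sum_(b | b == j) v (i, b))); last first.
  by move=> i _; rewrite big_pred1_eq.
by rewrite pair_big_dep /line_sum; apply: eq_big => [[a b]|[a b] _].
Qed.

Lemma lin_objE w v : lin_obj w v = \sum_i \sum_j v (i, j) * w (i, j).
Proof. by rewrite pair_big; apply: eq_bigr => [[a b]]. Qed.

Lemma sum_line_sums_inl v : \sum_i line_sum v (inl i) = \sum_p v p.
Proof.
under eq_bigr do rewrite line_sum_inl.
by rewrite pair_big; apply: eq_bigr => [[a b]].
Qed.

Lemma sum_line_sums_inr v : \sum_j line_sum v (inr j) = \sum_p v p.
Proof.
under eq_bigr do rewrite line_sum_inr.
by rewrite exchange_big pair_big; apply: eq_bigr => [[a b]].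
Qed.

Lemma line_sum_shift v d e k :
  line_sum (fun p => v p + e * d p) k = line_sum v k + e * line_sum d k.
Proof. by rewrite /line_sum big_split mulr_sumr. Qed.

Lemma lin_obj_shift w v d e :
  lin_obj w (fun p => v p + e * d p) = lin_obj w v + e * lin_obj w d.
Proof.
rewrite /lin_obj mulr_sumr -big_split.
by apply: eq_bigr => p _; rewrite mulrDl mulrA.
Qed.

Lemma balanced_direction v :
  (forall k, line_sum v k \is a Num.int) -> fractional v != set0 ->
  exists d, [/\ forall p, d p != 0 -> p \in fractional v,
    exists p, d p != 0 & forall k, line_sum d k = 0].
Proof.
move=> v_int /set0Pn [p0 p0F]; set F := fractional v in p0F *.
have rows2 : (2 * #|[set p.1 | p in F]| <= #|F|)%N.
  apply: double_card_imset_leq => p; rewrite inE => vp.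
  have [q [/eqP q1 qp vq]] := fractional_partner (v_int (inl p.1)) (eqxx p.1) vp.
  by exists q; rewrite inE.
have cols2 : (2 * #|[set p.2 | p in F]| <= #|F|)%N.
  apply: double_card_imset_leq => p; rewrite inE => vp.
  have [q [/eqP q2 qp vq]] := fractional_partner (v_int (inr p.2)) (eqxx p.2) vp.
  by exists q; rewrite inE.
(* The column of [p0] is left out: rows and columns have the same total. *)
set Ks := inl @: [set p.1 | p in F] :|: inr @: ([set p.2 | p in F] :\ p0.2).
have ltKF : (#|Ks| < #|F|)%N.
  rewrite (leq_ltn_trans (leq_card_setU _ _).1) //.
  rewrite (card_imset _ inl_inj) (card_imset _ inr_inj).
  have half_sum (r c f : nat) : (2 * r <= f -> 2 * c.+1 <= f -> r + c < f)%N.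
    by lia.
  rewrite (cardsD1 p0.2) imset_f // in cols2.
  exact: half_sum rows2 cols2.
have [d [dF [p dp] dK]] :=
  underdetermined_system_nontrivial (fun k p => (on_line k p)%:R : R) ltKF.
have dKE k : k \in Ks -> line_sum d k = 0.
  move=> kK; rewrite -(dK k kK) /line_sum big_mkcond.
  by apply: eq_bigr => q _; case: ifP; rewrite ?mul1r ?mul0r.
have off_line k : k != inr p0.2 -> line_sum d k = 0.
  move=> k_neq; have [/dKE //|kK] := boolP (k \in Ks).
  rewrite /line_sum big1 // => q qk; apply: dF; apply: contra kK => qF.
  case: k k_neq qk => [i|j] k_neq /eqP qk; rewrite inE -qk.
    by rewrite !imset_f.
  rewrite (inj_eq inr_inj) -qk in k_neq.
  by rewrite imset_f ?orbT // in_setD1 k_neq imset_f.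
exists d; split.
- by move=> q; apply: contraR => /dF ->; rewrite eqxx.
- by exists p.
- move=> k; have [->|] := eqVneq k (inr p0.2); last exact: off_line.
  have rows0 : \sum_i line_sum d (inl i) = 0.
    by rewrite big1 // => i _; apply: off_line.
  have := sum_line_sums_inr d; rewrite -sum_line_sums_inl rows0.
  rewrite (bigD1 p0.2) //= big1 ?addr0 // => j j_neq.
  by apply: off_line; rewrite (inj_eq inr_inj).
Qed.

Lemma improving_balanced_direction w v :
  (forall k, line_sum v k \is a Num.int) -> fractional v != set0 ->
  exists d, [/\ forall p, d p != 0 -> p \in fractional v,
    exists p, d p != 0, forall k, line_sum d k = 0 & 0 <= lin_obj w d].
Proof.
move=> v_int v_frac; have [d [dF [p dp] d0]] := balanced_direction v_int v_frac.
have [obj_ge0|obj_lt0] := leP 0 (lin_obj w d).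
  by exists d; split=> //; exists p.
exists (fun p => - d p); split.
- by move=> q; rewrite oppr_eq0; apply: dF.
- by exists p; rewrite oppr_eq0.
- by move=> k; rewrite /line_sum sumrN -/(line_sum d k) d0 oppr0.
- rewrite /lin_obj (eq_bigr _ (fun q _ => mulNr (d q) (w q))) sumrN.
  by rewrite oppr_ge0 ltW.
Qed.

Lemma shift_rounds_an_entry v d :
  (forall p, 0 <= v p) -> (forall p, d p != 0 -> p \in fractional v) ->
  (exists p, d p != 0) ->
  exists2 e, 0 <= e & (forall p, 0 <= v p + e * d p) /\
    fractional (fun p => v p + e * d p) \proper fractional v.
Proof.
move=> v_ge0 dF [p0 dp0].
have [q dq qmin] : exists2 q, d q != 0 &
    forall p, d p != 0 -> int_hit_time (v q) (d q) <= int_hit_time (v p) (d p).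
  case: [arg min_(p < p0 | d p != 0) int_hit_time (v p) (d p)]%O / arg_minP => //.
  by move=> q dq qmin; exists q.
exists (int_hit_time (v q) (d q)); first exact: int_hit_time_ge0.
split.
- move=> p; have [->|dp] := eqVneq (d p) 0; first by rewrite mulr0 addr0.
  by apply: ge0_shift_le_int_hit; rewrite ?int_hit_time_ge0 ?qmin.
- apply/properP; split.
  + apply/subsetP => p; rewrite !inE; apply: contraNN => vp_int.
    have [->|dp] := eqVneq (d p) 0; first by rewrite mulr0 addr0.
    by have := dF p dp; rewrite inE vp_int.
  + by exists q; [apply: dF | rewrite inE negbK int_hit_time_int].
Qed.

Lemma integral_rounding w v :
  (forall p, 0 <= v p) -> (forall k, line_sum v k \is a Num.int) ->
  exists v', [/\ forall p, 0 <= v' p, forall p, v' p \is a Num.int,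
    forall k, line_sum v' k = line_sum v k & lin_obj w v <= lin_obj w v'].
Proof.
have [N] := ubnP #|fractional v|; elim: N v => // N IH v lt_frac_N v_ge0 v_int.
have [v_frac0|v_frac] := eqVneq (fractional v) set0.
  exists v; split=> // p; apply/negPn/negP => vp.
  have : p \in fractional v by rewrite inE.
  by rewrite v_frac0 inE.
have [d [dF dnz d0 d_obj]] := improving_balanced_direction w v_int v_frac.
have [e e_ge0 [v1_ge0 lt_frac]] := shift_rounds_an_entry v_ge0 dF dnz.
have v1_line k : line_sum (fun p => v p + e * d p) k = line_sum v k.
  by rewrite line_sum_shift d0 mulr0 addr0.
have [||v2 [v2_ge0 v2_int v2_line v2_obj]] := IH _ _ v1_ge0.
- by rewrite -ltnS (leq_trans _ lt_frac_N) // ltnS proper_card.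
- by move=> k; rewrite v1_line.
exists v2; split=> // [k|]; first by rewrite v2_line v1_line.
by apply: le_trans v2_obj; rewrite lin_obj_shift lerDl mulr_ge0.
Qed.

End Transportation.

Section BipartiteRounding.
Variables (R : archiRealFieldType) (I J : finType) (a : I -> nat) (b : J -> nat).

(* The corner entry is the total mass; it makes the slack row and the slack
   column sum to [\sum_j b j] and [\sum_i a i]. *)
Definition slack_completion (nu : I -> J -> R) (p : option I * option J) : R :=
  match p with
  | (Some i, Some j) => nu i j
  | (Some i, None) => (a i)%:R - \sum_j nu i j
  | (None, Some j) => (b j)%:R - \sum_i nu i j
  | (None, None) => \sum_i \sum_j nu i j
  end.

Lemma bmatching_rounding (nu w : I -> J -> R) :
  (forall i j, 0 <= nu i j) -> (forall i, \sum_j nu i j <= (a i)%:R) ->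
  (forall j, \sum_i nu i j <= (b j)%:R) ->
  exists nu' : I -> J -> nat, [/\ forall i, (\sum_j nu' i j <= a i)%N,
    forall j, (\sum_i nu' i j <= b j)%N &
    \sum_i \sum_j nu i j * w i j <= \sum_i \sum_j (nu' i j)%:R * w i j].
Proof.
move=> nu_ge0 row_le col_le.
set V := slack_completion nu.
pose W p := if p is (Some i, Some j) then w i j else 0.
have objW f : lin_obj W f = \sum_i \sum_j f (Some i, Some j) * w i j.
  rewrite lin_objE big_option big1 ?add0r => [|[j|] _]; rewrite ?mulr0 //.
  by apply: eq_bigr => i _; rewrite big_option mulr0 add0r.
have V_ge0 p : 0 <= V p.
  case: p => [[i|] [j|]] //=; rewrite ?subr_ge0 //.
  by do 2 apply: sumr_ge0 => ? _.
have row_some i : line_sum V (inl (Some i)) = (a i)%:R.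
  by rewrite line_sum_inl big_option /= subrK.
have col_some j : line_sum V (inr (Some j)) = (b j)%:R.
  by rewrite line_sum_inr big_option /= subrK.
have V_int k : line_sum V k \is a Num.int.
  case: k => [[i|]|[j|]]; rewrite ?row_some ?col_some ?natr_int //.
    rewrite line_sum_inl big_option /= sumrB exchange_big addrC subrK.
    by rewrite rpred_sum // => j _; rewrite natr_int.
  rewrite line_sum_inr big_option /= sumrB addrC subrK.
  by rewrite rpred_sum // => i _; rewrite natr_int.
have [V' [V'_ge0 V'_int V'_line V'_obj]] := integral_rounding W V_ge0 V_int.
have V'_nat p : V' p \is a Num.nat by rewrite -intrEge0.
exists (fun i j => Num.truncn (V' (Some i, Some j))); split.
- move=> i; rewrite -(ler_nat R) natr_sum.
  under eq_bigr do rewrite truncnK //.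
  by rewrite -row_some -V'_line line_sum_inl big_option lerDr.
- move=> j; rewrite -(ler_nat R) natr_sum.
  under eq_bigr do rewrite truncnK //.
  by rewrite -col_some -V'_line line_sum_inr big_option lerDr.
- under [in X in _ <= X]eq_bigr do under eq_bigr do rewrite truncnK //.
  by move: V'_obj; rewrite !objW.
Qed.

End BipartiteRounding.

Section Roommates.
Variables (R : realType) (X : finType) (n : X -> nat) (Phi : X -> X -> R).

(* A pair [{x, x}] uses two units of [n x], hence the doubled diagonal. *)
Definition bip_of_frac (mu : X -> X -> R) x y : R :=
  if x == y then 2 * mu x x else mu x y.

Definition frac_of_bip (nu : X -> X -> nat) x y : R :=
  if x == y then (nu x x)%:R / 2 else ((nu x y)%:R + (nu y x)%:R) / 2.

Lemma sum_bip_of_frac mu x :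
  \sum_y bip_of_frac mu x y = 2 * mu x x + \sum_(y | y != x) mu x y.
Proof.
rewrite (bigD1 x) //= /bip_of_frac eqxx; congr (_ + _).
by apply: eq_bigr => y y_neq; rewrite eq_sym (negbTE y_neq).
Qed.

Lemma frac_obj_bip_of_frac mu :
  frac_obj Phi mu = \sum_x \sum_y bip_of_frac mu x y * (Phi x y / 2).
Proof.
rewrite /frac_obj -big_split; apply: eq_bigr => x _ /=.
rewrite [RHS](bigD1 x) //= /bip_of_frac eqxx; congr (_ + _); first by field.
by apply: eq_bigr => y y_neq; rewrite eq_sym (negbTE y_neq) mulrA.
Qed.

Lemma frac_obj_le_bip mu : frac_matching n mu ->
  exists nu, bip_matching n nu /\ frac_obj Phi mu <= bip_obj Phi nu.
Proof.
case=> mu_ge0 [mu_sym mu_le].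
have bip_sym x y : bip_of_frac mu x y = bip_of_frac mu y x.
  by rewrite /bip_of_frac eq_sym; case: eqP => [->|_] //; apply: mu_sym.
have [|||nu [row_le col_le obj_le]] :=
  bmatching_rounding (a := n) (b := n) (nu := bip_of_frac mu)
    (fun x y => Phi x y / 2).
- by move=> x y; rewrite /bip_of_frac; case: eqP => _; rewrite ?mulr_ge0.
- by move=> x; rewrite sum_bip_of_frac.
- by move=> y; under eq_bigr do rewrite bip_sym; rewrite sum_bip_of_frac.
by exists nu; split; [split | rewrite frac_obj_bip_of_frac].
Qed.

Lemma bip_obj_max : exists2 nu, bip_matching n nu &
  forall nu', bip_matching n nu' -> bip_obj Phi nu' <= bip_obj Phi nu.
Proof.
pose N := (\sum_x n x)%N.
pose matching_of (f : {ffun X * X -> 'I_N.+1}) x y := nat_of_ord (f (x, y)).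
pose feasible f := [forall x, \sum_y matching_of f x y <= n x]%N &&
  [forall y, \sum_x matching_of f x y <= n y]%N.
have feasibleP f : reflect (bip_matching n (matching_of f)) (feasible f).
  by apply: (iffP andP) => [[/forallP ? /forallP ?]|[? ?]];
    split=> //; apply/forallP.
have feasible0 : feasible [ffun => ord0].
  by apply/feasibleP; split=> x; rewrite big1 // => y _;
    rewrite /matching_of ffunE.
case: (@arg_maxP _ R _ _ feasible (bip_obj Phi \o matching_of) feasible0).
move=> f /feasibleP f_feasible f_max.
exists (matching_of f) => // nu nu_feasible.
have nu_lt x y : (nu x y < N.+1)%N.
  have le_row : (nu x y <= \sum_z nu x z)%N by rewrite (bigD1 y) //= leq_addr.
  have le_N : (n x <= N)%N by rewrite /N (bigD1 x) //= leq_addr.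
  by rewrite ltnS (leq_trans le_row (leq_trans (proj1 nu_feasible x) le_N)).
pose g : {ffun X * X -> 'I_N.+1} := [ffun p => inord (nu p.1 p.2)].
have gE : matching_of g =2 nu by move=> x y; rewrite /matching_of ffunE inordK.
have -> : bip_obj Phi nu = bip_obj Phi (matching_of g).
  by apply: eq_bigr => x _; apply: eq_bigr => y _; rewrite gE.
apply: f_max; apply/feasibleP; case: nu_feasible => row_le col_le.
by split=> x; under eq_bigr do rewrite gE.
Qed.

Lemma bip_of_frac_of_bip nu x y :
  bip_of_frac (frac_of_bip nu) x y = ((nu x y)%:R + (nu y x)%:R) / 2.
Proof.
by rewrite /bip_of_frac /frac_of_bip; case: eqP => [->|_]; rewrite ?eqxx //; lra.
Qed.

Lemma frac_of_bip_matching nu :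
  bip_matching n nu -> frac_matching n (frac_of_bip nu).
Proof.
case=> row_le col_le; split; [|split].
- by move=> x y; rewrite /frac_of_bip; case: eqP => _; rewrite divr_ge0 ?addr_ge0.
- by move=> x y; rewrite /frac_of_bip eq_sym; case: eqP => [->|_] //; rewrite addrC.
- move=> x; rewrite -sum_bip_of_frac.
  under eq_bigr do rewrite bip_of_frac_of_bip.
  rewrite -mulr_suml big_split /= -!natr_sum.
  have : (\sum_y nu x y)%:R <= (n x)%:R :> R by rewrite ler_nat.
  have : (\sum_y nu y x)%:R <= (n x)%:R :> R by rewrite ler_nat.
  lra.
Qed.

Lemma frac_of_bip_half_integral nu : half_integral (frac_of_bip nu).
Proof.
move=> x y; rewrite /frac_of_bip; case: eqP => _; first by exists (nu x x).
by exists (nu x y + nu y x)%N; rewrite natrD.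
Qed.

Hypothesis Phi_sym : forall x y, Phi x y = Phi y x.

Lemma frac_obj_frac_of_bip nu : frac_obj Phi (frac_of_bip nu) = bip_obj Phi nu.
Proof.
have swap : \sum_x \sum_y (nu y x)%:R * (Phi x y / 2) = bip_obj Phi nu.
  rewrite /bip_obj exchange_big.
  by apply: eq_bigr => x _; apply: eq_bigr => y _; rewrite Phi_sym.
transitivity ((bip_obj Phi nu + bip_obj Phi nu) / 2); last by lra.
rewrite frac_obj_bip_of_frac -[B in (B + _) / 2]swap /bip_obj.
rewrite -big_split mulr_suml.
apply: eq_bigr => x _; rewrite -big_split mulr_suml.
by apply: eq_bigr => y _; rewrite bip_of_frac_of_bip /=; ring.
Qed.

End Roommates.

Theorem lemma1 (R : realType) (X : finType) (x0 : X) (n : X -> nat)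
    (Phi : X -> X -> R) (Phi_sym : forall x y, Phi x y = Phi y x) :
  exists w : R,
    is_max_value (frac_matching n) (frac_obj Phi) w /\
    is_max_value (bip_matching n) (bip_obj Phi) w /\
    (exists mu, frac_matching n mu /\ half_integral mu /\ frac_obj Phi mu = w).
Proof.
have [nu nu_feasible nu_max] := bip_obj_max n Phi.
have mu_feasible := frac_of_bip_matching R nu_feasible.
have mu_obj := frac_obj_frac_of_bip Phi_sym nu.
exists (bip_obj Phi nu); split; [|split].
- split; first by exists (frac_of_bip R nu).
  move=> mu /(frac_obj_le_bip Phi) [nu' [nu'_feasible le_nu']].
  exact: le_trans le_nu' (nu_max _ nu'_feasible).
- by split; first exists nu.
- exists (frac_of_bip R nu); split=> //; split=> //.
  exact: frac_of_bip_half_integral.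
Qed.
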